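(* Let $p>2$ be an odd prime and $q=p^\ell$ with $\ell\geq 1$. Let $\widetilde{\mathbb{F}}$ be a field of characteristic $p$ and $f:\mathbb{F}_q\to\widetilde{\mathbb{F}}$ an SD-map. Then $f(\mathbb{F}_q)$ is the unique subfield of $\widetilde{\mathbb{F}}$ of order $q$ (in particular, such a subfield exists).
   Context: $\mathbb{F}_q$ is the finite field with $q$ elements. A map $f:\mathbb{F}\to\widetilde{\mathbb{F}}$ between fields is called an SD-map if for all $x\neq y$ in $\mathbb{F}$ one has $f(x)\neq f(y)$ and \[ f\left(\frac{x+y}{x-y}\right)=\frac{f(x)+f(y)}{f(x)-f(y)}. \] *)

From mathcomp Require Import all_boot all_algebra all_field.
Set Implicit Arguments. Unset Strict Implicit. Unset Printing Implicit Defensive.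
Import GRing.Theory.
Local Open Scope ring_scope.

Definition SD_map (F G : fieldType) (f : F -> G) : Prop :=
  forall x y : F, x != y ->
    f x != f y /\ f ((x + y) / (x - y)) = (f x + f y) / (f x - f y).

From mathcomp Require Import all_boot all_algebra all_field.
From mathcomp Require Import ring.

(* An SD-map f fixes 0 and 1.  Writing cayley z = (z + 1) / (z - 1), one has
   (x + y) / (x - y) = cayley (x / y), while the SD identity at (z, 1) says
   f (cayley z) = cayley (f z); as cayley is injective when 2 != 0, f is
   multiplicative.  Hence f x ^+ q = f (x ^+ q) = f x, and the q distinct values
   of f are all the roots of X^q - X, which form a subfield because q is a power
   of the characteristic.  A subfield with q elements also consists of roots of
   X^q - X (multiplication by r != 0 permutes its nonzero elements), so it is
   the image of f. *)

Set Implicit Arguments.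
Unset Strict Implicit.
Unset Printing Implicit Defensive.
Import GRing.Theory.
Local Open Scope ring_scope.

Lemma card_gt2_exists_neq (T : finType) (x y : T) :
  (2 < #|T|)%N -> exists2 z, z != x & z != y.
Proof.
move=> T_gt2; have /card_gt0P[z] : (0 < #|~: [set x; y]|)%N.
  rewrite cardsCs setCK cards2 subn_gt0; apply: leq_ltn_trans T_gt2.
  by case: (x != y).
by rewrite !inE negb_or => /andP[]; exists z.
Qed.

Lemma mulr_stable_expr_size (K : fieldType) (s : seq K) (r : K) :
  uniq s -> 0 \notin s -> r != 0 -> {in s, forall y, r * y \in s} ->
  r ^+ size s = 1.
Proof.
move=> s_uniq s_neq0 r_neq0 rs_sub.
have rs_uniq : uniq (map ( *%R r) s) by rewrite (map_inj_uniq (mulfI r_neq0)).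
have rs_eq : map ( *%R r) s =i s.
  apply: (uniq_min_size rs_uniq _ _).2; last by rewrite size_map.
  by move=> _ /mapP[y ys ->]; apply: rs_sub.
have prod_s_neq0 : \prod_(y <- s) y != 0.
  by rewrite prodf_seq_neq0; apply/allP => y ys; apply: contraNneq s_neq0 => <-.
have := perm_big _ (uniq_perm rs_uniq s_uniq rs_eq) : \prod_(y <- _) y = _.
rewrite big_map big_split /= big_const_seq count_predT iter_mulr_1.
by rewrite -[RHS]mul1r => /(mulIf prod_s_neq0).
Qed.

Lemma divring_closed_expr_size (K : fieldType) (s : seq K) :
  uniq s -> GRing.divring_closed (mem s) -> {in s, forall r, r ^+ size s = r}.
Proof.
move=> s_uniq s_closed r rs; have [s1 sB _] := s_closed.
have [_ sM] : GRing.mulr_closed (mem s) := s_closed.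
have s0 : 0 \in s by rewrite -(subrr 1) sB.
have s_gt0 : (0 < size s)%N by case: (s) s0.
have [-> | r_neq0] := eqVneq r 0; first by rewrite expr0n eqn0Ngt s_gt0.
have mem_s' y : (y \in rem 0 s) = (y != 0) && (y \in s).
  by rewrite mem_rem_uniq.
have -> : size s = (size (rem 0 s)).+1 by rewrite size_rem // prednK.
rewrite exprS (@mulr_stable_expr_size _ _ r) ?mulr1 ?rem_uniq ?mem_s' ?eqxx //.
by move=> y; rewrite !mem_s' => /andP[y_neq0 ys]; rewrite mulf_neq0 ?sM.
Qed.

Lemma mem_poly_roots (K : fieldType) (P : {poly K}) (rs : seq K) :
  P != 0 -> all (root P) rs -> uniq rs -> size rs = (size P).-1 ->
  root P =i rs.
Proof.
move=> P_neq0 rs_roots rs_uniq rs_size x; rewrite -topredE /=.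
apply/idP/idP => [Px | /(allP rs_roots)//].
apply: contraT => x_rs; have := max_poly_roots P_neq0 (rs := x :: rs).
rewrite /= Px x_rs rs_roots rs_uniq rs_size prednK ?size_poly_gt0 //.
by rewrite ltnn => /(_ isT isT).
Qed.

Lemma mem_expr_fixed (K : fieldType) (q : nat) (s : seq K) :
  (1 < q)%N -> uniq s -> size s = q -> {in s, forall x, x ^+ q = x} ->
  [pred x | x ^+ q == x] =i s.
Proof.
move=> q_gt1 s_uniq s_size s_fixed x.
have P_size : size ('X^q - 'X : {poly K}) = q.+1.
  by rewrite size_polyDl ?size_polyXn // size_polyN size_polyX ltnS.
have P_roots : root ('X^q - 'X) =i s.
  apply: mem_poly_roots; rewrite -?size_poly_eq0 ?P_size ?s_size //.
  by apply/allP => y ys; rewrite rootE !hornerE s_fixed ?subrr.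
by rewrite -P_roots -topredE /= rootE !hornerE subr_eq0.
Qed.

Lemma eq_divring_closed (R : unitRingType) (S T : {pred R}) :
  S =i T -> GRing.divring_closed S -> GRing.divring_closed T.
Proof.
move=> eqST [S1 SB SD]; split=> [|x y|x y]; rewrite -!eqST.
- exact: S1.
- exact: SB.
- exact: SD.
Qed.

Lemma pchar_expr_fixed_divring_closed (K : fieldType) (p n : nat) :
  p \in [pchar K] -> GRing.divring_closed [pred x : K | x ^+ (p ^ n)%N == x].
Proof.
move=> pK; have pn_pchar : [pchar K].-nat (p ^ n)%N.
  by rewrite pnatX (pnatE _ (pcharf_prime pK)) pK.
split=> [|x y /eqP xq /eqP yq|x y /eqP xq /eqP yq]; rewrite inE ?expr1n //.
  by rewrite exprDn_pchar // exprNn_pchar // xq yq.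
by rewrite exprMn exprVn xq yq.
Qed.

Lemma pchar_gt2_two_neq0 (K : fieldType) (p : nat) :
  p \in [pchar K] -> (2 < p)%N -> (2 : K) != 0.
Proof.
move=> pK; apply: contraTneq => K20.
have : 2 \in [pchar K] by rewrite inE /= K20 eqxx.
by rewrite (pcharf_eq pK) inE => /eqP <-.
Qed.

Definition cayley {K : fieldType} (z : K) := (z + 1) / (z - 1).

Lemma cayley_inj (K : fieldType) :
  (2 : K) != 0 -> {in predC1 1 &, injective (@cayley K)}.
Proof.
move=> K2 u v u_neq1 v_neq1 /eqP; rewrite /cayley eqr_div ?subr_eq0 // => /eqP e.
apply/eqP; rewrite eq_sym -subr_eq0 -(mulrI_eq0 _ (mulfI K2)); apply/eqP.
by transitivity ((u + 1) * (v - 1) - (v + 1) * (u - 1)); [ring | rewrite e subrr].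
Qed.

Lemma divDB_cayley (K : fieldType) (x y : K) :
  y != 0 -> (x + y) / (x - y) = cayley (x / y).
Proof.
move=> y_neq0; rewrite /cayley -[1](divff y_neq0) -!mulrBl -mulrDl.
by rewrite invf_div mulrA divfK.
Qed.

Section SDMap.

Variables (F K : fieldType) (f : F -> K).
Hypotheses (f_SD : SD_map f) (K2 : (2 : K) != 0).

Lemma SD_map_inj : injective f.
Proof. by move=> x y fxy; apply/eqP/negP => /negP /f_SD[]; rewrite fxy eqxx. Qed.

Lemma SD_map_at0 x : x != 0 -> f 1 * (f x - f 0) = f x + f 0.
Proof.
move=> x_neq0; have [fx_neq0 ] := f_SD x_neq0.
by rewrite addr0 subr0 divff // => ->; rewrite divfK // subr_eq0.
Qed.

Lemma SD_map1 (a : F) : a != 0 -> a != 1 -> f 1 = 1.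
Proof.
move=> a_neq0 a_neq1; have : (f 1 - 1) * (f a - f 1) = 0.
  transitivity (f 1 * (f a - f 0) - f 1 * (f 1 - f 0)
                - (f a + f 0 - (f 1 + f 0))); first by ring.
  by rewrite SD_map_at0 // SD_map_at0 ?oner_neq0 // subrr.
move/eqP; rewrite mulf_eq0 !subr_eq0 (inj_eq SD_map_inj) (negbTE a_neq1) orbF.
exact: eqP.
Qed.

Hypothesis f1 : f 1 = 1.

Lemma SD_map0 : f 0 = 0.
Proof.
have := @SD_map_at0 1 (oner_neq0 F); rewrite f1 mul1r => SD_10.
apply/eqP; rewrite -(mulrI_eq0 _ (mulfI K2)); apply/eqP.
by transitivity ((1 + f 0) - (1 - f 0)); [ring | rewrite SD_10 subrr].
Qed.

Lemma SD_map_eq1 z : (f z == 1) = (z == 1).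
Proof. by rewrite -f1 (inj_eq SD_map_inj). Qed.

Lemma SD_map_cayley z : z != 1 -> f (cayley z) = cayley (f z).
Proof. by move=> z_neq1; have [_] := f_SD z_neq1; rewrite f1. Qed.

Lemma SD_map_div x y : f (x / y) = f x / f y.
Proof.
have [-> | y_neq0] := eqVneq y 0.
  by rewrite !invr0 !mulr0 SD_map0 invr0 mulr0.
have fy_neq0 : f y != 0 by rewrite -SD_map0 (inj_eq SD_map_inj).
have [-> | x_neq_y] := eqVneq x y; first by rewrite !divff.
have [fx_neq_fy SD_xy] := f_SD x_neq_y.
have xy_neq1 := contra_neq (@divr1_eq _ x y) x_neq_y.
have fxy_neq1 := contra_neq (@divr1_eq _ (f x) (f y)) fx_neq_fy.
move: SD_xy; rewrite !divDB_cayley // SD_map_cayley //.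
by apply: (cayley_inj K2); rewrite !inE /= ?SD_map_eq1.
Qed.

Lemma SD_mapV x : f x^-1 = (f x)^-1.
Proof. by rewrite -[x^-1]mul1r SD_map_div f1 mul1r. Qed.

Lemma SD_mapM x y : f (x * y) = f x * f y.
Proof. by rewrite -[y in LHS]invrK SD_map_div SD_mapV invrK. Qed.

Lemma SD_mapX x n : f (x ^+ n) = f x ^+ n.
Proof. by elim: n => [|n IHn]; rewrite ?f1 // !exprS SD_mapM IHn. Qed.

End SDMap.

Theorem lemma3p1 (p l : nat) (F : finFieldType) (K : fieldType) (f : F -> K) :
  prime p -> (2 < p)%N -> (1 <= l)%N -> #|F| = (p ^ l)%N ->
  p \in [pchar K] -> SD_map f ->
  [/\ GRing.divring_closed (mem (codom f)),
      uniq (codom f),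
      size (codom f) = (p ^ l)%N &
      forall s : seq K, uniq s -> size s = (p ^ l)%N ->
        GRing.divring_closed (mem s) -> s =i codom f].
Proof.
move=> p_prime p_gt2 l_gt0 cardF pK f_SD; set q := (p ^ l)%N.
have K2 := pchar_gt2_two_neq0 pK p_gt2.
have q_gt2 : (2 < q)%N.
  exact: leq_trans p_gt2 (leq_pexp2l (prime_gt0 p_prime) l_gt0).
have [a a_neq0 a_neq1] : exists2 a : F, a != 0 & a != 1.
  by apply: card_gt2_exists_neq; rewrite cardF.
have f1 := SD_map1 f_SD a_neq0 a_neq1.
have f_uniq : uniq (codom f).
  by rewrite codomE (map_inj_uniq (SD_map_inj f_SD)) enum_uniq.
have f_size : size (codom f) = q by rewrite size_codom.
have fixed_codom : [pred x | x ^+ q == x] =i codom f.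
  apply: mem_expr_fixed (ltnW q_gt2) f_uniq f_size _ => _ /codomP[x ->].
  by rewrite -SD_mapX // /q -cardF expf_card.
split=> // [|s s_uniq s_size s_closed r].
  exact: eq_divring_closed fixed_codom (pchar_expr_fixed_divring_closed l pK).
rewrite -fixed_codom (mem_expr_fixed (ltnW q_gt2) s_uniq s_size) // => y ys.
by rewrite -{1}s_size divring_closed_expr_size.
Qed.
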